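(* Let $\alpha\ge-1/2$, $a\ge1$, $j\in\{1,2,\dots\}$ and $k>0$. For $x,y\in\mathbb{R}_+$, $x\neq y$, let \[ I_k=\int_{-1}^1\int_0^1\xi^{-k}\beta_{\alpha+aj}(\xi)\exp\Big(-\frac{x^2+y^2+2xys}{4\xi}\Big)d\xi\,\Pi_{\alpha+aj}(ds). \] Then $I_k\le\dfrac{C_{\alpha,k}}{(x+y)^{2\alpha+1}(xy)^{aj}|x-y|^{2k}}$ with $C_{\alpha,k}$ independent of $j$, $x$, $y$.
   Context: For $m>-1$, $\beta_m(\xi)=\sqrt{\tfrac2\pi}\big(\frac{1-\xi^2}{2\xi}\big)^{1+m}\frac1{1-\xi^2}\big(\log\frac{1+\xi}{1-\xi}\big)^{-1/2}$, $\xi\in(0,1)$. For $\nu>-1/2$, $\Pi_\nu$ is the measure on $[-1,1]$ given by $\Pi_\nu(du)=\frac{(1-u^2)^{\nu-1/2}}{\sqrt\pi\,2^\nu\Gamma(\nu+1/2)}du$. *)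

From Stdlib Require Import Reals Lra ClassicalEpsilon.
Open Scope R_scope.

(* Total Riemann integral on [a,b]: the Stdlib RiemannInt when f is
   Riemann integrable (value independent of the proof), 0 otherwise. *)
Definition Rint (f : R -> R) (a b : R) : R :=
  match excluded_middle_informative (inhabited (Riemann_integrable f a b)) with
  | left H => RiemannInt (epsilon H (fun _ => True))
  | right _ => 0
  end.

(* Total limit of a real sequence (0 if it does not converge). *)
Definition Rlim (u : nat -> R) : R :=
  match excluded_middle_informative (exists l, Un_cv u l) with
  | left H => proj1_sig (constructive_indefinite_description _ H)
  | right _ => 0
  end.

Definition Gamma (z : R) : R :=
  Rlim (fun n => Rint (fun t => Rpower t (z - 1) * exp (- t))
                      (/ INR (S n)) (INR (S n))).

Definition beta (m xi : R) : R :=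
  sqrt (2 / PI) * Rpower ((1 - xi ^ 2) / (2 * xi)) (1 + m) * / (1 - xi ^ 2)
  * Rpower (ln ((1 + xi) / (1 - xi))) (- (1 / 2)).

Definition Pi_density (nu u : R) : R :=
  Rpower (1 - u ^ 2) (nu - 1 / 2)
  / (sqrt PI * Rpower 2 nu * Gamma (nu + 1 / 2)).

Definition I_k (k nu x y : R) : R :=
  Rint (fun s =>
          Rint (fun xi => Rpower xi (- k) * beta nu xi
                          * exp (- ((x ^ 2 + y ^ 2 + 2 * x * y * s) / (4 * xi))))
               0 1
          * Pi_density nu s)
       (-1) 1.

(* Write m = alpha + a j (so m >= 1/2), z = m + 1/2 >= 1 and
   E(s) = x^2 + y^2 + 2 x y s.  The proof has three layers.

   1. Inner xi-integral.  Since (1 - xi^2)^m <= 1 and ln((1+xi)/(1-xi)) >= xi,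
      beta_m(xi) <= c_m xi^(-m-3/2) with c_m = pi^(-1/2) 2^(-m-1/2), so the
      integrand is bounded by c_m times the inverse-gamma kernel
      xi^(-(z+1+k)) e^(-E/(4 xi)).  Split at xi_0 = E/(4 M_k z): below xi_0
      the kernel is increasing and Gamma(z) >= z^(z-1) e^(-z-1) controls its
      value; above xi_0 the substitution t = E/(4 xi) yields a truncated
      Gamma integral.  Result: <= c_m (1 + M_k^k) z^k Gamma(z) (4/E)^(z+k).
   2. Outer s-integral.  Against the density of Pi_m, Gamma(z) cancels and,
      with 1 - theta(s) = (x+y)^2 (1-s^2) / (4E), ln(1 - theta) <= -theta
      reduces the integrand to z^k (4/(x+y)^2)^(z-1) E^(-1-k) e^(-z theta).
      Its integral is <= K3 z^(-k) |x-y|^(-2k) (x+y)^(-2): by sup bounds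
      where theta >= 1/4, and by explicit primitives on [-1,0] near the
      diagonal.
   3. The factors z^k and z^(-k) cancel, and 4xy <= (x+y)^2 turns
      (4/(x+y)^2)^(a j) into (xy)^(-a j). *)

From Stdlib Require Import Reals Lra ClassicalEpsilon.
From Coquelicot Require Import Coquelicot.
Open Scope R_scope.
Set Bullet Behavior "Strict Subproofs".

Lemma exp_mono a b : a <= b -> exp a <= exp b.
Proof. intros [H|H]; [left; apply exp_increasing | subst]; lra. Qed.

Lemma ln_le_sub1 t : 0 < t -> ln t <= t - 1.
Proof.
  intros Ht. assert (H := exp_ineq1_le (t - 1)).
  rewrite <- (ln_exp (t - 1)). apply ln_le; lra.
Qed.

(* Rescaled tangent bound: p ln t <= p c t - p (1 + ln c).  All constants of
   the form sup_t t^p e^(-c t) used below come from it. *)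
Lemma pow_le_exp p c t : 0 <= p -> 0 < c -> 0 < t ->
  p * ln t <= p * c * t - p * (1 + ln c).
Proof.
  intros Hp Hc Ht.
  assert (H := ln_le_sub1 (c * t) ltac:(apply Rmult_lt_0_compat; lra)).
  rewrite ln_mult in H by lra.
  assert (p * ln t <= p * (c * t - 1 - ln c)) by (apply Rmult_le_compat_l; lra).
  lra.
Qed.

Lemma Rint_RInt (f : R -> R) a b : ex_RInt f a b -> Rint f a b = RInt f a b.
Proof.
  intros H. unfold Rint. destruct excluded_middle_informative as [Hi|Hi].
  - symmetry; apply RInt_Reals.
  - exfalso; apply Hi; constructor; now apply ex_RInt_Reals_0.
Qed.

Lemma Rint_not (f : R -> R) a b : ~ ex_RInt f a b -> Rint f a b = 0.
Proof.
  intros H. unfold Rint. destruct excluded_middle_informative as [Hi|Hi]; auto.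
  exfalso; apply H. destruct Hi as [Hi]. now apply ex_RInt_Reals_1.
Qed.

Lemma Rint_le (f : R -> R) a b M : 0 <= M ->
  (ex_RInt f a b -> RInt f a b <= M) -> Rint f a b <= M.
Proof.
  intros HM H. destruct (classic (ex_RInt f a b)) as [Hf|Hf].
  - rewrite Rint_RInt; auto.
  - rewrite Rint_not; auto.
Qed.

Lemma ex_RInt_der (f : R -> R) a b : a <= b ->
  (forall t, a <= t <= b -> ex_derive f t) -> ex_RInt f a b.
Proof.
  intros Hab H. apply (ex_RInt_continuous (V:=R_CompleteNormedModule)).
  intros t Ht. rewrite Rmin_left, Rmax_right in Ht by lra.
  apply (ex_derive_continuous (V:=R_NormedModule)), H; lra.
Qed.

Lemma RInt_const_R a b c : RInt (fun _ => c) a b = c * (b - a).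
Proof. rewrite RInt_const. unfold scal; simpl; unfold mult; simpl. ring. Qed.

Lemma RInt_le_const (f : R -> R) a b c : a <= b -> ex_RInt f a b ->
  (forall t, a < t < b -> f t <= c) -> RInt f a b <= c * (b - a).
Proof.
  intros Hab Hf H. rewrite <- RInt_const_R.
  apply RInt_le; auto. apply ex_RInt_const.
Qed.

Lemma RInt_ge_const (f : R -> R) a b c : a <= b -> ex_RInt f a b ->
  (forall t, a < t < b -> c <= f t) -> c * (b - a) <= RInt f a b.
Proof.
  intros Hab Hf H. rewrite <- RInt_const_R.
  apply RInt_le; auto. apply ex_RInt_const.
Qed.

Lemma RInt_Chasles_R (f : R -> R) a b c : ex_RInt f a b -> ex_RInt f b c ->
  RInt f a c = RInt f a b + RInt f b c.
Proof. intros. now rewrite <- RInt_Chasles with (b := b). Qed.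

Lemma RInt_scal_R (f : R -> R) a b c : ex_RInt f a b ->
  RInt (fun t => c * f t) a b = c * RInt f a b.
Proof. intros H. exact (RInt_scal (V:=R_CompleteNormedModule) f a b c H). Qed.

Lemma RInt_FTC (F f : R -> R) a b : a <= b ->
  (forall t, a <= t <= b -> is_derive F t (f t)) ->
  (forall t, a <= t <= b -> continuous f t) -> RInt f a b = F b - F a.
Proof.
  intros Hab H1 H2. apply is_RInt_unique, (is_RInt_derive F f);
  intros t Ht; rewrite Rmin_left, Rmax_right in Ht by lra; auto.
Qed.

Definition gamma_kernel z t := exp ((z - 1) * ln t - t).

Lemma gamma_kernel_cont z t : 0 < t -> continuous (gamma_kernel z) t.
Proof.
  intros Ht. apply (ex_derive_continuous (V:=R_NormedModule)).
  unfold gamma_kernel. auto_derive. lra.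
Qed.

Lemma gamma_kernel_ex z A B : 0 < A -> A <= B -> ex_RInt (gamma_kernel z) A B.
Proof.
  intros HA HAB. apply ex_RInt_der; auto.
  intros t Ht. unfold gamma_kernel. auto_derive. lra.
Qed.

Lemma gamma_kernel_RInt_ge0 z A B : 0 < A -> A <= B -> 0 <= RInt (gamma_kernel z) A B.
Proof.
  intros. apply RInt_ge_0; auto. apply gamma_kernel_ex; auto.
  intros; left; apply exp_pos.
Qed.

Lemma Rint_gamma_integrand z A B : 0 < A -> A <= B ->
  Rint (fun t => Rpower t (z - 1) * exp (- t)) A B = RInt (gamma_kernel z) A B.
Proof.
  intros HA HAB.
  assert (He : forall t, Rmin A B < t < Rmax A B ->
                 gamma_kernel z t = Rpower t (z - 1) * exp (- t)).
  { intros t Ht. unfold gamma_kernel, Rpower. rewrite <- exp_plus. f_equal; ring. }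
  rewrite Rint_RInt.
  - symmetry; apply RInt_ext; auto.
  - apply (ex_RInt_ext (gamma_kernel z)); auto. apply gamma_kernel_ex; auto.
Qed.

Lemma gamma_kernel_RInt_mono z A' A B B' : 0 < A' -> A' <= A -> A <= B -> B <= B' ->
  RInt (gamma_kernel z) A B <= RInt (gamma_kernel z) A' B'.
Proof.
  intros H1 H2 H3 H4.
  rewrite (RInt_Chasles_R _ A' A B'), (RInt_Chasles_R _ A B B');
    try (apply gamma_kernel_ex; lra).
  assert (H5 := gamma_kernel_RInt_ge0 z A' A H1 H2).
  assert (H6 := gamma_kernel_RInt_ge0 z B B' ltac:(lra) H4).
  lra.
Qed.

(* For z >= 1, t^(z-1) e^(-t) <= K e^(-t/2), so all these integrals are
   bounded by 2K. *)
Lemma gamma_kernel_RInt_bounded z : 1 <= z ->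
  exists K, forall A B, 0 < A -> A <= B -> RInt (gamma_kernel z) A B <= K.
Proof.
  intros Hz. set (K := exp (- (z - 1) * (1 + ln (/ (2 * z))))).
  exists (2 * K). intros A B HA HAB.
  assert (HK : 0 < K) by apply exp_pos.
  assert (Hle : forall t, 0 < t -> gamma_kernel z t <= K * exp (- t / 2)).
  { intros t Ht. unfold gamma_kernel, K. rewrite <- exp_plus. apply exp_mono.
    assert (Hc : 0 < / (2 * z)) by (apply Rinv_0_lt_compat; lra).
    assert (H := pow_le_exp (z - 1) (/ (2 * z)) t ltac:(lra) Hc Ht).
    assert ((z - 1) * / (2 * z) * t <= t / 2).
    { replace ((z - 1) * / (2 * z) * t) with (t / 2 - t / (2 * z)) by (field; lra).
      assert (0 <= t / (2 * z)) by (apply Rlt_le, Rdiv_lt_0_compat; lra). lra. }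
    lra. }
  assert (Hderiv : forall t, is_derive (fun t => - 2 * K * exp (- t / 2)) t (K * exp (- t / 2))).
  { intros t. auto_derive; auto. unfold Rdiv. field. }
  assert (Hint : RInt (fun t => K * exp (- t / 2)) A B
                 = 2 * K * exp (- A / 2) - 2 * K * exp (- B / 2)).
  { rewrite (RInt_FTC (fun t => - 2 * K * exp (- t / 2)) _ A B HAB (fun t _ => Hderiv t));
      [simpl; lra|].
    intros t _. apply (ex_derive_continuous (V:=R_NormedModule)). auto_derive; auto. }
  apply Rle_trans with (RInt (fun t => K * exp (- t / 2)) A B).
  { apply RInt_le; auto. apply gamma_kernel_ex; auto.
    apply ex_RInt_der; auto. intros; auto_derive; auto.
    intros t Ht; apply Hle; lra. }
  rewrite Hint.
  assert (exp (- A / 2) <= 1) by (rewrite <- exp_0; apply exp_mono; lra).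
  assert (0 < exp (- B / 2)) by apply exp_pos.
  nra.
Qed.

Lemma truncation_bounds N : 0 < / INR (S N) <= 1 /\ 1 <= INR (S N).
Proof.
  assert (H : 1 <= INR (S N)) by (rewrite S_INR; assert (0 <= INR N) by apply pos_INR; lra).
  repeat split; auto. apply Rinv_0_lt_compat; lra.
  rewrite <- Rinv_1. apply Rinv_le_contravar; lra.
Qed.

(* For z >= 1 the truncated integrals defining Gamma increase and are
   bounded, so they converge to Gamma z and are all below it. *)
Lemma Gamma_as_sup z : 1 <= z ->
  forall N, RInt (gamma_kernel z) (/ INR (S N)) (INR (S N)) <= Gamma z.
Proof.
  intros Hz.
  set (u := fun N => RInt (gamma_kernel z) (/ INR (S N)) (INR (S N))).
  assert (Hg : Un_growing u).
  { intros N. unfold u. destruct (truncation_bounds N) as [[a1 a2] a3].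
    destruct (truncation_bounds (S N)) as [[b1 b2] b3].
    rewrite (S_INR (S N)) in *.
    apply gamma_kernel_RInt_mono; try lra. apply Rinv_le_contravar; lra. }
  assert (Hb : has_ub u).
  { destruct (gamma_kernel_RInt_bounded z Hz) as [K HK]. exists K.
    intros _ [N ->]. unfold u. destruct (truncation_bounds N) as [[a1 a2] a3].
    apply HK; lra. }
  destruct (growing_cv u Hg Hb) as [l Hl].
  assert (Hdef : forall N, Rint (fun t => Rpower t (z - 1) * exp (- t))
                             (/ INR (S N)) (INR (S N)) = u N).
  { intros N. destruct (truncation_bounds N) as [[a1 a2] a3].
    apply Rint_gamma_integrand; lra. }
  assert (HG : Gamma z = l).
  { unfold Gamma, Rlim. destruct excluded_middle_informative as [H|H].
    - destruct (constructive_indefinite_description _ H) as [l' Hl']. simpl.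
      apply (UL_sequence (fun n => Rint (fun t => Rpower t (z - 1) * exp (- t))
                                       (/ INR (S n)) (INR (S n)))); auto.
      eapply Un_cv_ext; [|apply Hl]. intros N; now rewrite Hdef.
    - exfalso. apply H. exists l. eapply Un_cv_ext; [|apply Hl].
      intros N; now rewrite Hdef. }
  rewrite HG. intros N. change (u N <= l). now apply growing_ineq.
Qed.

Lemma RInt_le_Gamma z A B : 1 <= z -> 0 < A -> A <= B ->
  RInt (gamma_kernel z) A B <= Gamma z.
Proof.
  intros Hz HA HAB.
  destruct (nfloor_ex (Rmax B (/ A)) ltac:(apply Rle_trans with B; [lra | apply Rmax_l]))
    as [N [HN1 HN2]].
  assert (HBm := Rmax_l B (/ A)). assert (HAm := Rmax_r B (/ A)).
  destruct (truncation_bounds N) as [[a1 a2] a3]. rewrite S_INR in *.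
  apply Rle_trans with (2 := Gamma_as_sup z Hz N). rewrite S_INR.
  apply gamma_kernel_RInt_mono; try lra.
  rewrite <- (Rinv_inv A). apply Rinv_le_contravar; [apply Rinv_0_lt_compat|]; lra.
Qed.

(* Lower bound Gamma z >= z^(z-1) e^(-z-1), from the integral over [z, z+1]. *)
Lemma Gamma_lower z : 1 <= z -> exp ((z - 1) * ln z - z - 1) <= Gamma z.
Proof.
  intros Hz. apply Rle_trans with (RInt (gamma_kernel z) z (z + 1)).
  - replace (exp ((z - 1) * ln z - z - 1))
      with (exp ((z - 1) * ln z - z - 1) * (z + 1 - z)) by ring.
    apply RInt_ge_const; [lra | apply gamma_kernel_ex; lra |].
    intros t Ht. unfold gamma_kernel. apply exp_mono.
    assert (ln z <= ln t) by (apply ln_le; lra).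
    assert ((z - 1) * ln z <= (z - 1) * ln t) by (apply Rmult_le_compat_l; lra).
    lra.
  - apply RInt_le_Gamma; lra.
Qed.

Lemma Gamma_pos z : 1 <= z -> 0 < Gamma z.
Proof. intros Hz. eapply Rlt_le_trans; [apply exp_pos | apply Gamma_lower; auto]. Qed.

Lemma ln_ratio_ge xi : 0 < xi < 1 -> xi <= ln ((1 + xi) / (1 - xi)).
Proof.
  intros H.
  assert (Hp : 0 < (1 - xi) / (1 + xi)) by (apply Rdiv_lt_0_compat; lra).
  assert (H1 := ln_le_sub1 _ Hp).
  replace ((1 + xi) / (1 - xi)) with (/ ((1 - xi) / (1 + xi))) by (field; lra).
  rewrite ln_Rinv by auto.
  replace ((1 - xi) / (1 + xi) - 1) with (- (2 * xi / (1 + xi))) in H1 by (field; lra).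
  assert (xi <= 2 * xi / (1 + xi)).
  { apply Rmult_le_reg_r with (1 + xi); [lra|].
    replace (2 * xi / (1 + xi) * (1 + xi)) with (2 * xi) by (field; lra). nra. }
  lra.
Qed.

Definition beta_const m := / sqrt PI * Rpower 2 (- (m + 1 / 2)).

Lemma beta_const_pos m : 0 < beta_const m.
Proof.
  apply Rmult_lt_0_compat; [|apply exp_pos].
  apply Rinv_0_lt_compat, sqrt_lt_R0, PI_RGT_0.
Qed.

(* beta_m(xi) <= c_m xi^(-m-3/2), using (1 - xi^2)^m <= 1 and ln((1+xi)/(1-xi)) >= xi. *)
Lemma beta_le m xi : 0 <= m -> 0 < xi < 1 ->
  beta m xi <= beta_const m * Rpower xi (- (m + 3 / 2)).
Proof.
  intros Hm Hxi. unfold beta, beta_const, Rpower.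
  set (u := 1 - xi ^ 2).
  assert (Hu : 0 < u < 1) by (unfold u; nra).
  assert (Hpi : 0 < PI) by apply PI_RGT_0.
  assert (Hsp : 0 < sqrt PI) by (apply sqrt_lt_R0; lra).
  assert (E1 : exp ((1 + m) * ln (u / (2 * xi))) * / u
               = exp (m * ln u - (1 + m) * (ln 2 + ln xi))).
  { rewrite ln_div, ln_mult by lra. rewrite <- (exp_ln u) at 2 by lra.
    rewrite <- exp_Ropp, <- exp_plus. f_equal. ring. }
  assert (E2 : sqrt (2 / PI) = exp (ln 2 / 2) * / sqrt PI).
  { unfold Rdiv. rewrite sqrt_mult_alt, sqrt_inv by lra.
    rewrite <- Rpower_sqrt by lra. unfold Rpower. do 2 f_equal. field. }
  rewrite E2.
  replace (exp (ln 2 / 2) * / sqrt PI * exp ((1 + m) * ln (u / (2 * xi))) * / u *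
           exp (- (1 / 2) * ln (ln ((1 + xi) / (1 - xi)))))
    with (/ sqrt PI * exp (ln 2 / 2 + (m * ln u - (1 + m) * (ln 2 + ln xi))
                           + - (1 / 2) * ln (ln ((1 + xi) / (1 - xi)))))
    by (rewrite !exp_plus, <- E1; ring).
  rewrite Rmult_assoc, <- exp_plus. apply Rmult_le_compat_l; [left; apply Rinv_0_lt_compat; lra|].
  apply exp_mono.
  assert (ln u < 0) by (rewrite <- ln_1; apply ln_increasing; lra).
  assert (m * ln u <= 0) by nra.
  assert (ln xi <= ln (ln ((1 + xi) / (1 - xi)))) by (apply ln_le; [lra | apply ln_ratio_ge; lra]).
  lra.
Qed.

Definition ikernel p E xi := exp (- p * ln xi - E / (4 * xi)).

Lemma ikernel_ex p E a b : 0 < a <= b -> ex_RInt (ikernel p E) a b.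
Proof.
  intros Hab. apply ex_RInt_der; [lra|]. intros t Ht. unfold ikernel.
  auto_derive; repeat split; lra.
Qed.

Lemma inner_integrand_le m k E xi : 0 <= m -> 0 < xi < 1 ->
  Rpower xi (- k) * beta m xi * exp (- (E / (4 * xi)))
  <= beta_const m * ikernel (m + 3 / 2 + k) E xi.
Proof.
  intros Hm Hxi.
  assert (H0 : 0 <= Rpower xi (- k) * exp (- (E / (4 * xi))))
    by (left; apply Rmult_lt_0_compat; apply exp_pos).
  apply Rle_trans with (Rpower xi (- k) * exp (- (E / (4 * xi))) *
                        (beta_const m * Rpower xi (- (m + 3 / 2)))).
  - replace (Rpower xi (- k) * beta m xi * exp (- (E / (4 * xi))))
      with (Rpower xi (- k) * exp (- (E / (4 * xi))) * beta m xi) by ring.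
    apply Rmult_le_compat_l; auto. apply beta_le; auto.
  - right. unfold ikernel, Rpower.
    replace (- (m + 3 / 2 + k) * ln xi - E / (4 * xi))
      with (- k * ln xi + - (E / (4 * xi)) + - (m + 3 / 2) * ln xi) by ring.
    rewrite !exp_plus. ring.
Qed.

(* The splitting point of the xi-integral is xi_0 = E / (4 M_k z). *)
Definition Mk k := 16 * (1 + k) ^ 2.

Lemma tail_ineq z k t : 1 <= z -> 0 < k -> Mk k * z <= t ->
  (z + k) * ln t - t <= (z + k - 1) * ln z - z - 1.
Proof.
  intros Hz Hk Ht. unfold Mk in Ht.
  set (rho := t / z).
  assert (Hrho : 16 * (1 + k) ^ 2 <= rho).
  { unfold rho. apply Rmult_le_reg_r with z; [lra|].
    replace (t / z * z) with t by (field; lra). lra. }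
  assert (Ht' : t = rho * z) by (unfold rho; field; lra).
  assert (Hlt : ln t = ln rho + ln z) by (rewrite Ht'; apply ln_mult; nra).
  assert (Hsr : 4 * (1 + k) <= sqrt rho).
  { rewrite <- (sqrt_square (4 * (1 + k))) by lra. apply sqrt_le_1_alt. nra. }
  assert (Hsq : sqrt rho * sqrt rho = rho) by (apply sqrt_sqrt; nra).
  assert (Hl1 : ln rho = 2 * ln (sqrt rho)).
  { rewrite <- Hsq at 1. rewrite ln_mult by (apply sqrt_lt_R0; nra). ring. }
  assert (Hl2 := ln_le_sub1 (sqrt rho) ltac:(apply sqrt_lt_R0; nra)).
  assert (Hk1 : (1 + k) * ln rho <= (rho - 1) / 2).
  { assert ((1 + k) * ln rho <= (1 + k) * (2 * (sqrt rho - 1)))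
      by (apply Rmult_le_compat_l; lra).
    nra. }
  assert (Hlr : 0 <= ln rho) by (rewrite <- ln_1; apply ln_le; nra).
  assert (Hz2 : (z + k) * ln rho <= z * ((1 + k) * ln rho)).
  { assert (0 <= k * (z - 1) * ln rho) by (repeat apply Rmult_le_pos; lra). nra. }
  assert (Hz3 : z * ((1 + k) * ln rho) <= z * ((rho - 1) / 2))
    by (apply Rmult_le_compat_l; lra).
  assert (Hlz := ln_le_sub1 z ltac:(lra)).
  rewrite Hlt, Ht'. nra.
Qed.

Lemma ikernel_mono p E xi xi1 : 0 <= p -> 0 < xi -> xi <= xi1 -> p <= E / (4 * xi1) ->
  ikernel p E xi <= ikernel p E xi1.
Proof.
  intros Hp H0 H1 H2. apply exp_mono.
  assert (Hl := ln_le_sub1 (xi1 / xi) ltac:(apply Rdiv_lt_0_compat; lra)).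
  rewrite ln_div in Hl by lra.
  assert (Hq : 0 <= xi1 / xi - 1).
  { assert (1 <= xi1 / xi); [|lra].
    apply Rmult_le_reg_r with xi; [lra|]. replace (xi1 / xi * xi) with xi1 by (field; lra). lra. }
  assert (He : E / (4 * xi) - E / (4 * xi1) = E / (4 * xi1) * (xi1 / xi - 1)) by (field; lra).
  assert (p * (xi1 / xi - 1) <= E / (4 * xi1) * (xi1 / xi - 1)) by (apply Rmult_le_compat_r; lra).
  assert (p * (ln xi1 - ln xi) <= p * (xi1 / xi - 1)) by (apply Rmult_le_compat_l; lra).
  nra.
Qed.

Lemma ikernel_change_var z E y : 0 < E -> 0 < y ->
  - E / (4 * y ^ 2) * gamma_kernel z (E / (4 * y))
  = - exp (- (z * ln (4 / E))) * ikernel (z + 1) E y.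
Proof.
  intros HE Hy. unfold gamma_kernel, ikernel.
  replace (- E / (4 * y ^ 2)) with (- exp (ln E - ln 4 - 2 * ln y)).
  - rewrite ln_div, ln_div, ln_mult by lra.
    rewrite <- !Ropp_mult_distr_l, <- !exp_plus. do 2 f_equal. ring.
  - replace (ln E - ln 4 - 2 * ln y) with (ln (E / (4 * y ^ 2))).
    + rewrite exp_ln by (apply Rdiv_lt_0_compat; nra). field. lra.
    + rewrite ln_div, ln_mult, ln_pow; try nra. simpl. ring.
Qed.

Lemma ikernel_RInt z E a : 0 < E -> 0 < a <= 1 ->
  RInt (ikernel (z + 1) E) a 1
  = Rpower (4 / E) z * RInt (gamma_kernel z) (E / 4) (E / (4 * a)).
Proof.
  intros HE Ha.
  assert (Hc : RInt (fun y => scal (- E / (4 * y ^ 2)) (gamma_kernel z (E / (4 * y)))) a 1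
               = RInt (gamma_kernel z) (E / (4 * a)) (E / (4 * 1))).
  { apply (RInt_comp (V:=R_CompleteNormedModule) _ (fun y => E / (4 * y)));
      rewrite Rmin_left, Rmax_right by lra; intros t Ht.
    - apply gamma_kernel_cont, Rdiv_lt_0_compat; lra.
    - split.
      + auto_derive; [lra | field; lra].
      + apply (ex_derive_continuous (V:=R_NormedModule)). auto_derive. nra. }
  rewrite (RInt_ext _ (fun y => - exp (- (z * ln (4 / E))) * ikernel (z + 1) E y)) in Hc
    by (rewrite Rmin_left, Rmax_right by lra; intros t Ht; apply ikernel_change_var; lra).
  rewrite RInt_scal_R in Hc by (apply ikernel_ex; lra).
  replace (E / (4 * 1)) with (E / 4) in Hc by field.
  rewrite <- (opp_RInt_swap (V:=R_CompleteNormedModule) _ (E / 4)) in Hc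
    by (apply gamma_kernel_ex; [lra | apply Rmult_le_compat_l, Rinv_le_contravar; lra]).
  unfold Rpower. rewrite exp_Ropp in Hc. unfold opp in Hc; simpl in Hc.
  assert (He : 0 < exp (z * ln (4 / E))) by apply exp_pos.
  apply Rmult_eq_reg_l with (/ exp (z * ln (4 / E)));
    [|apply Rgt_not_eq, Rinv_0_lt_compat; lra].
  rewrite <- Rmult_assoc, Rinv_l, Rmult_1_l by lra. lra.
Qed.

Lemma ikernel_near0 z k E xi1 : 1 <= z -> 0 < k -> 0 < E -> 0 < xi1 ->
  Mk k * z <= E / (4 * xi1) ->
  xi1 * ikernel (z + 1 + k) E xi1 <= Rpower z k * Gamma z * Rpower (4 / E) (z + k).
Proof.
  intros Hz Hk HE Hxi1 Ht1. unfold ikernel, Rpower.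
  set (t1 := E / (4 * xi1)) in *.
  assert (Hl : ln xi1 = - ln (4 / E) - ln t1).
  { unfold t1. rewrite !ln_div, ln_mult by lra. ring. }
  rewrite <- (exp_ln xi1) at 1 by lra. rewrite <- exp_plus, Hl.
  assert (Htail := tail_ineq z k t1 Hz Hk Ht1).
  apply Rle_trans with (exp ((z + k) * ln (4 / E)) * exp ((z + k - 1) * ln z - z - 1)).
  - rewrite <- exp_plus. apply exp_mono. nra.
  - replace (exp ((z + k - 1) * ln z - z - 1))
      with (exp (k * ln z) * exp ((z - 1) * ln z - z - 1))
      by (rewrite <- exp_plus; f_equal; ring).
    assert (HG := Gamma_lower z Hz).
    assert (0 < exp (k * ln z)) by apply exp_pos.
    assert (0 < exp ((z + k) * ln (4 / E))) by apply exp_pos.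
    replace (exp (k * ln z) * Gamma z * exp ((z + k) * ln (4 / E)))
      with (exp ((z + k) * ln (4 / E)) * (exp (k * ln z) * Gamma z)) by ring.
    apply Rmult_le_compat_l; [lra|]. apply Rmult_le_compat_l; lra.
Qed.

(* Beyond xi_0 = E/(4 M_k z): xi^(-k) <= xi_0^(-k), and the remaining kernel
   integrates to a truncated Gamma integral. *)
Lemma ikernel_far z k E xi0 : 1 <= z -> 0 < k -> 0 < E -> 0 < xi0 < 1 ->
  xi0 = E / (4 * (Mk k * z)) ->
  Rpower xi0 (- k) * RInt (ikernel (z + 1) E) xi0 1
  <= Rpower (Mk k) k * Rpower z k * Gamma z * Rpower (4 / E) (z + k).
Proof.
  intros Hz Hk HE Hxi0 Hdef.
  assert (HM : 0 < Mk k) by (unfold Mk; nra).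
  rewrite ikernel_RInt by lra.
  assert (Hgi : RInt (gamma_kernel z) (E / 4) (E / (4 * xi0)) <= Gamma z).
  { apply RInt_le_Gamma; [lra | lra |].
    apply Rmult_le_compat_l, Rinv_le_contravar; lra. }
  assert (Hl : - k * ln xi0 = k * ln (Mk k) + k * ln z + k * ln (4 / E)).
  { rewrite Hdef, !ln_div, !ln_mult by nra. ring. }
  unfold Rpower. rewrite Hl.
  replace ((z + k) * ln (4 / E)) with (k * ln (4 / E) + z * ln (4 / E)) by ring.
  rewrite !exp_plus.
  assert (0 < exp (k * ln (Mk k)) * exp (k * ln z) * exp (k * ln (4 / E)) * exp (z * ln (4 / E)))
    by (repeat apply Rmult_lt_0_compat; apply exp_pos).
  nra.
Qed.

(* The part of the xi-integral over [0, xi_1], xi_1 <= xi_0: the kernel is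
   increasing there, so it is bounded by its value at xi_1. *)
Lemma inner_near_part (f : R -> R) z k E c xi1 : 1 <= z -> 0 < k -> 0 < E -> 0 <= c ->
  0 < xi1 -> Mk k * z <= E / (4 * xi1) -> ex_RInt f 0 xi1 ->
  (forall xi, 0 < xi < xi1 -> f xi <= c * ikernel (z + 1 + k) E xi) ->
  RInt f 0 xi1 <= c * (Rpower z k * Gamma z * Rpower (4 / E) (z + k)).
Proof.
  intros Hz Hk HE Hc Hxi1 Ht1 Hex Hf.
  assert (HMk : z + 1 + k <= Mk k * z) by (unfold Mk; nra).
  apply Rle_trans with (c * ikernel (z + 1 + k) E xi1 * (xi1 - 0)).
  - apply RInt_le_const; [lra | auto |].
    intros t Ht. apply Rle_trans with (1 := Hf t Ht).
    apply Rmult_le_compat_l; auto. apply ikernel_mono; lra.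
  - replace (c * ikernel (z + 1 + k) E xi1 * (xi1 - 0))
      with (c * (xi1 * ikernel (z + 1 + k) E xi1)) by ring.
    apply Rmult_le_compat_l; auto. apply ikernel_near0; auto.
Qed.

(* The part over [xi_0, 1] when xi_0 < 1: xi^(-k) <= xi_0^(-k) there. *)
Lemma inner_far_part (f : R -> R) z k E c xi0 : 1 <= z -> 0 < k -> 0 < E -> 0 <= c ->
  0 < xi0 < 1 -> xi0 = E / (4 * (Mk k * z)) -> ex_RInt f xi0 1 ->
  (forall xi, xi0 < xi < 1 -> f xi <= c * ikernel (z + 1 + k) E xi) ->
  RInt f xi0 1 <= c * (Rpower (Mk k) k * (Rpower z k * Gamma z * Rpower (4 / E) (z + k))).
Proof.
  intros Hz Hk HE Hc Hxi0 Hdef Hex Hf.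
  apply Rle_trans with (RInt (fun xi => c * Rpower xi0 (- k) * ikernel (z + 1) E xi) xi0 1).
  - apply RInt_le; auto; [lra | |].
    + apply ex_RInt_der; [lra|]. intros t Ht. unfold ikernel. auto_derive; repeat split; lra.
    + intros t Ht. apply Rle_trans with (1 := Hf t Ht).
      rewrite Rmult_assoc. apply Rmult_le_compat_l; auto.
      unfold ikernel, Rpower. rewrite <- exp_plus. apply exp_mono.
      assert (ln xi0 <= ln t) by (apply ln_le; lra). nra.
  - rewrite RInt_scal_R by (apply ikernel_ex; lra). rewrite Rmult_assoc.
    apply Rmult_le_compat_l; auto. rewrite <- !Rmult_assoc. apply ikernel_far; auto.
Qed.

(* The xi-integral: if f <= c xi^(-(z+1+k)) e^(-E/(4 xi)) on (0,1), then
   int_0^1 f <= c (1 + M_k^k) z^k Gamma(z) (4/E)^(z+k).  Split at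
   xi_1 = min(xi_0, 1). *)
Lemma inner_bound (f : R -> R) z k E c : 1 <= z -> 0 < k -> 0 < E -> 0 <= c ->
  (forall xi, 0 < xi < 1 -> f xi <= c * ikernel (z + 1 + k) E xi) ->
  Rint f 0 1 <= c * (1 + Rpower (Mk k) k) * Rpower z k * Gamma z * Rpower (4 / E) (z + k).
Proof.
  intros Hz Hk HE Hc Hf.
  set (G := Rpower z k * Gamma z * Rpower (4 / E) (z + k)).
  assert (HG : 0 < G).
  { unfold G. assert (H := Gamma_pos z Hz).
    repeat apply Rmult_lt_0_compat; auto; apply exp_pos. }
  assert (HMk : 0 < Rpower (Mk k) k) by apply exp_pos.
  replace (c * (1 + Rpower (Mk k) k) * Rpower z k * Gamma z * Rpower (4 / E) (z + k))
    with (c * G + c * (Rpower (Mk k) k * G)) by (unfold G; ring).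
  apply Rint_le; [apply Rplus_le_le_0_compat; apply Rmult_le_pos; nra|]. intros Hex.
  set (xi0 := E / (4 * (Mk k * z))).
  assert (Hxi0 : 0 < xi0) by (unfold xi0, Mk; apply Rdiv_lt_0_compat; nra).
  set (xi1 := Rmin xi0 1).
  assert (Hxi1 : 0 < xi1 <= 1) by (unfold xi1; split; [apply Rmin_glb_lt | apply Rmin_r]; lra).
  assert (Hxi01 : xi1 <= xi0) by apply Rmin_l.
  assert (Ht1 : Mk k * z <= E / (4 * xi1)).
  { replace (Mk k * z) with (E / (4 * xi0)) by (unfold xi0, Mk; field; nra).
    apply Rmult_le_compat_l, Rinv_le_contravar; lra. }
  assert (Hex1 : ex_RInt f 0 xi1) by (apply (ex_RInt_Chasles_1 f 0 xi1 1); auto; lra).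
  assert (Hex2 : ex_RInt f xi1 1) by (apply (ex_RInt_Chasles_2 f 0 xi1 1); auto; lra).
  rewrite (RInt_Chasles_R f 0 xi1 1) by auto.
  apply Rplus_le_compat.
  - apply inner_near_part; auto; try lra. intros xi Hxi. apply Hf; lra.
  - destruct (Rle_lt_dec 1 xi0) as [H1|H1].
    + assert (xi1 = 1) by (unfold xi1; apply Rmin_right; lra).
      rewrite H, RInt_point. apply Rmult_le_pos; [lra | apply Rlt_le, Rmult_lt_0_compat; lra].
    + assert (Hx : xi1 = xi0) by (unfold xi1; apply Rmin_left; lra). rewrite Hx in *.
      apply inner_far_part; auto; try lra. intros xi Hxi. apply Hf; lra.
Qed.

Definition Ef x y s := x ^ 2 + y ^ 2 + 2 * x * y * s.
Definition theta x y s := 1 - (x + y) ^ 2 * (1 - s ^ 2) / (4 * Ef x y s).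

Definition Psi k z x y s := exp (- (1 + k) * ln (Ef x y s) - z * theta x y s).

Lemma Ef_ge x y s : 0 < x -> 0 < y -> -1 <= s -> (x - y) ^ 2 <= Ef x y s.
Proof. intros. unfold Ef. assert (0 <= x * y * (1 + s)) by (apply Rmult_le_pos; nra). nra. Qed.

Lemma Ef_le x y s : 0 < x -> 0 < y -> s <= 1 -> Ef x y s <= (x + y) ^ 2.
Proof. intros. unfold Ef. assert (0 <= x * y * (1 - s)) by (apply Rmult_le_pos; nra). nra. Qed.

Lemma sqr_diff_pos x y : x <> y -> 0 < (x - y) ^ 2.
Proof. intros. assert (x - y <> 0) by lra. nra. Qed.

Lemma Ef_pos x y s : 0 < x -> 0 < y -> x <> y -> -1 <= s -> 0 < Ef x y s.
Proof.
  intros. apply Rlt_le_trans with ((x - y) ^ 2); [apply sqr_diff_pos | apply Ef_ge]; auto.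
Qed.

(* The numerator of theta, written as a sum of two nonnegative terms on [-1,1]. *)
Lemma theta_eq x y s : 0 < Ef x y s ->
  4 * Ef x y s * theta x y s = 2 * (x - y) ^ 2 * (1 - s) + (x + y) ^ 2 * (1 + s) ^ 2.
Proof.
  intros H.
  replace (4 * Ef x y s * theta x y s) with (4 * Ef x y s - (x + y) ^ 2 * (1 - s ^ 2))
    by (unfold theta; field; lra).
  unfold Ef; ring.
Qed.

Lemma Psi_ex k z x y a b : 0 < x -> 0 < y -> x <> y -> -1 <= a <= b ->
  ex_RInt (Psi k z x y) a b.
Proof.
  intros Hx Hy Hxy Hab. apply ex_RInt_der; [lra|]. intros s Hs.
  assert (H := Ef_pos x y s Hx Hy Hxy ltac:(lra)).
  unfold Psi, theta. unfold Ef in *. auto_derive. lra.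
Qed.

Definition Ka k := exp (- k * (1 + ln (/ (4 * k)))).
Definition Kd k := exp (- k * (1 + ln (/ k))).

Lemma Ka_spec k z : 0 < k -> 0 < z -> exp (- z / 4) <= Ka k * Rpower z (- k).
Proof.
  intros Hk Hz. unfold Ka, Rpower. rewrite <- exp_plus. apply exp_mono.
  assert (H := pow_le_exp k (/ (4 * k)) z ltac:(lra) ltac:(apply Rinv_0_lt_compat; lra) Hz).
  replace (k * / (4 * k) * z) with (z / 4) in H by (field; lra). lra.
Qed.

Lemma Kd_spec k t : 0 < k -> 0 < t -> Rpower t k * exp (- t) <= Kd k.
Proof.
  intros Hk Ht. unfold Kd, Rpower. rewrite <- exp_plus. apply exp_mono.
  assert (H := pow_le_exp k (/ k) t ltac:(lra) ltac:(apply Rinv_0_lt_compat; lra) Ht).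
  replace (k * / k * t) with t in H by (field; lra). lra.
Qed.

Lemma Psi_le_sup k z x y s : 0 < k -> 1 <= z -> 0 < x -> 0 < y -> x <> y -> -1 <= s ->
  1 / 4 <= theta x y s -> (x + y) ^ 2 / 2 <= Ef x y s ->
  Psi k z x y s <= 2 * Ka k * (Rpower z (- k) * Rpower ((x - y) ^ 2) (- k) / (x + y) ^ 2).
Proof.
  intros Hk Hz Hx Hy Hxy Hs Ht HE.
  assert (HEp := Ef_pos x y s Hx Hy Hxy Hs).
  assert (HD := sqr_diff_pos x y Hxy).
  assert (HEge := Ef_ge x y s Hx Hy Hs).
  assert (HS : 0 < (x + y) ^ 2) by nra.
  apply Rle_trans with (/ Ef x y s * Rpower ((x - y) ^ 2) (- k) * exp (- z / 4)).
  - unfold Psi, Rpower. rewrite <- (exp_ln (Ef x y s)) at 2 by lra.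
    rewrite <- exp_Ropp, <- !exp_plus. apply exp_mono.
    assert (ln ((x - y) ^ 2) <= ln (Ef x y s)) by (apply ln_le; lra).
    assert (z * (1 / 4) <= z * theta x y s) by (apply Rmult_le_compat_l; lra).
    nra.
  - assert (/ Ef x y s <= 2 / (x + y) ^ 2).
    { apply Rle_trans with (/ ((x + y) ^ 2 / 2)); [apply Rinv_le_contravar; lra | right; field; lra]. }
    assert (H2 := Ka_spec k z Hk ltac:(lra)).
    assert (0 < Rpower ((x - y) ^ 2) (- k)) by apply exp_pos.
    assert (0 < exp (- z / 4)) by apply exp_pos.
    replace (2 * Ka k * (Rpower z (- k) * Rpower ((x - y) ^ 2) (- k) / (x + y) ^ 2))
      with (2 / (x + y) ^ 2 * Rpower ((x - y) ^ 2) (- k) * (Ka k * Rpower z (- k)))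
      by (field; lra).
    apply Rmult_le_compat; try lra.
    + apply Rmult_le_pos; [left; apply Rinv_0_lt_compat|]; lra.
    + apply Rmult_le_compat_r; lra.
Qed.

Lemma theta_quarter x y s : 0 < x -> 0 < y -> x <> y -> -1 <= s ->
  Ef x y s <= 2 * (x - y) ^ 2 * (1 - s) + (x + y) ^ 2 * (1 + s) ^ 2 -> 1 / 4 <= theta x y s.
Proof.
  intros Hx Hy Hxy Hs H. assert (HE := Ef_pos x y s Hx Hy Hxy Hs).
  assert (Ht := theta_eq x y s HE). apply Rmult_le_reg_l with (4 * Ef x y s); lra.
Qed.

(* Near the diagonal the s-integral over [-1,0] is computed through explicit
   primitives.  With lam = z (x-y)^2 / 2 one has z theta >= lam / E there, and
   E^(-1-k) e^(-lam/E) splits into the s-derivative of a multiple of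
   E^(-k) e^(-lam/E) plus a term bounded through t^k e^(-t) <= Kd. *)
Definition left_dens k lam x y s := exp (- k * ln (Ef x y s) - lam / Ef x y s).

Definition left_prim k lam c x y s :=
  - left_dens k lam x y s / (2 * x * y * k)
  + c * (exp (- lam / (2 * Ef x y s)) / (lam * x * y)).

Definition left_maj k lam c x y s :=
  left_dens k lam x y s * (1 / Ef x y s - lam / (k * Ef x y s ^ 2))
  + c * (exp (- lam / (2 * Ef x y s)) / Ef x y s ^ 2).

Lemma left_prim_deriv k lam c x y s : 0 < k -> 0 < lam -> 0 < x -> 0 < y -> x <> y ->
  -1 <= s -> is_derive (left_prim k lam c x y) s (left_maj k lam c x y s).
Proof.
  intros Hk Hl Hx Hy Hxy Hs. assert (HE := Ef_pos x y s Hx Hy Hxy Hs).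
  unfold left_prim, left_maj, left_dens. unfold Ef in *. auto_derive.
  - repeat split; try lra; repeat apply Rmult_integral_contrapositive_currified; lra.
  - set (e := x ^ 2 + y ^ 2 + 2 * x * y * s) in *.
    replace (x * (x * 1) + y * (y * 1) + 2 * x * y * s) with e by (unfold e; ring).
    set (A := exp (- k * ln e - lam / e)). set (B := exp (- lam / (2 * e))).
    unfold Rminus, Rdiv in *. fold A B. field. repeat split; lra.
Qed.

Lemma left_maj_cont k lam c x y s : 0 < k -> 0 < x -> 0 < y -> x <> y -> -1 <= s ->
  continuous (left_maj k lam c x y) s.
Proof.
  intros Hk Hx Hy Hxy Hs. assert (HE := Ef_pos x y s Hx Hy Hxy Hs).
  apply (ex_derive_continuous (V:=R_NormedModule)).
  unfold left_maj, left_dens. unfold Ef in *. auto_derive.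
  repeat split; try lra; repeat apply Rmult_integral_contrapositive_currified; lra.
Qed.

Lemma left_dens_le k lam x y s : 0 < k -> 0 < lam -> 0 < Ef x y s ->
  left_dens k lam x y s <= Rpower (2 / lam) k * Kd k * exp (- lam / (2 * Ef x y s)).
Proof.
  intros Hk Hlam HE. unfold left_dens. set (e := Ef x y s) in *.
  assert (Htau := Kd_spec k (lam / (2 * e)) Hk ltac:(apply Rdiv_lt_0_compat; lra)).
  apply Rle_trans with (Rpower (2 / lam) k
                        * (Rpower (lam / (2 * e)) k * exp (- (lam / (2 * e))))
                        * exp (- lam / (2 * e))).
  - right. unfold Rpower. rewrite <- !exp_plus. f_equal.
    rewrite !ln_div, ln_mult by lra. field. lra.
  - apply Rmult_le_compat_r; [left; apply exp_pos|].
    apply Rmult_le_compat_l; [left; apply exp_pos | exact Htau].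
Qed.

(* On [-1,0], Psi <= left_maj: z theta >= lam/E there, and the remainder of
   E^(-1-k) e^(-lam/E) is handled by left_dens_le. *)
Lemma Psi_le_left_maj k z x y s : 0 < k -> 1 <= z -> 0 < x -> 0 < y -> x <> y ->
  -1 <= s <= 0 ->
  let lam := z * (x - y) ^ 2 / 2 in
  let c := lam / k * Rpower (2 / lam) k * Kd k in
  Psi k z x y s <= left_maj k lam c x y s.
Proof.
  intros Hk Hz Hx Hy Hxy Hs lam c.
  assert (HD := sqr_diff_pos x y Hxy).
  assert (Hlam : 0 < lam) by (unfold lam; nra).
  assert (HE := Ef_pos x y s Hx Hy Hxy ltac:(lra)).
  set (e := Ef x y s) in *.
  assert (Htheta : lam / e <= z * theta x y s).
  { apply Rmult_le_reg_r with (4 * e); [lra|].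
    replace (lam / e * (4 * e)) with (2 * z * (x - y) ^ 2) by (unfold lam; field; lra).
    replace (z * theta x y s * (4 * e)) with (z * (4 * e * theta x y s)) by ring.
    unfold e; rewrite theta_eq by auto.
    assert (0 <= (x + y) ^ 2 * (1 + s) ^ 2) by (apply Rmult_le_pos; nra).
    assert (2 * (x - y) ^ 2 <= 2 * (x - y) ^ 2 * (1 - s)) by nra. nra. }
  assert (Hsplit : exp (- (1 + k) * ln e - lam / e)
    = left_dens k lam x y s * (1 / e - lam / (k * e ^ 2))
      + lam / k * (left_dens k lam x y s / e ^ 2)).
  { unfold left_dens. fold e.
    replace (- (1 + k) * ln e - lam / e) with (- ln e + (- k * ln e - lam / e)) by ring.
    rewrite exp_plus, exp_Ropp, exp_ln by lra. field. lra. }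
  assert (Hdens := left_dens_le k lam x y s Hk Hlam HE).
  apply Rle_trans with (exp (- (1 + k) * ln e - lam / e)).
  - unfold Psi. apply exp_mono. fold e. lra.
  - rewrite Hsplit. unfold left_maj. fold e. apply Rplus_le_compat_l.
    unfold c. replace (lam / k * Rpower (2 / lam) k * Kd k * (exp (- lam / (2 * e)) / e ^ 2))
      with (lam / k * (Rpower (2 / lam) k * Kd k * exp (- lam / (2 * e)) / e ^ 2))
      by (unfold Rdiv; ring).
    apply Rmult_le_compat_l; [apply Rlt_le, Rdiv_lt_0_compat; lra|].
    unfold Rdiv. apply Rmult_le_compat_r; [left; apply Rinv_0_lt_compat; nra | exact Hdens].
Qed.

(* The primitive at s = 0 is bounded trivially (e^(-lam/(2E)) <= 1). *)
Lemma left_prim_at_0 k z x y : 0 < k -> 1 <= z -> 0 < x -> 0 < y -> x <> y ->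
  let lam := z * (x - y) ^ 2 / 2 in
  let c := lam / k * Rpower (2 / lam) k * Kd k in
  left_prim k lam c x y 0
  <= Rpower 4 k * Kd k * Rpower z (- k) * Rpower ((x - y) ^ 2) (- k) / (k * x * y).
Proof.
  intros Hk Hz Hx Hy Hxy lam c.
  assert (HD := sqr_diff_pos x y Hxy). set (D2 := (x - y) ^ 2) in *.
  assert (Hlam : 0 < lam) by (unfold lam; nra).
  assert (Hc : 0 < c).
  { assert (0 < lam / k) by (apply Rdiv_lt_0_compat; lra).
    unfold c. apply Rmult_lt_0_compat; [apply Rmult_lt_0_compat; auto|]; apply exp_pos. }
  assert (HE0 : 0 < Ef x y 0) by (apply Ef_pos; auto; lra).
  assert (Hlxy : 0 < lam * x * y) by (apply Rmult_lt_0_compat; [apply Rmult_lt_0_compat|]; lra).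
  assert (HA0 : 0 <= left_dens k lam x y 0 / (2 * x * y * k))
    by (left; apply Rdiv_lt_0_compat; [apply exp_pos | repeat apply Rmult_lt_0_compat; lra]).
  assert (HB0 : exp (- lam / (2 * Ef x y 0)) <= 1).
  { rewrite <- exp_0. apply exp_mono.
    assert (0 < lam / (2 * Ef x y 0)) by (apply Rdiv_lt_0_compat; lra).
    unfold Rdiv in *; lra. }
  assert (Hc1 : c * (1 / (lam * x * y)) = Rpower 4 k * Kd k * Rpower z (- k) * Rpower D2 (- k) / (k * x * y)).
  { unfold c, Rpower.
    replace (k * ln (2 / lam)) with (k * ln 4 + - k * ln z + - k * ln D2)
      by (unfold lam; rewrite !ln_div, !ln_mult by nra;
          replace 4 with (2 * 2) by ring; rewrite ln_mult by lra; field).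
    rewrite !exp_plus. field. repeat split; lra. }
  unfold left_prim. rewrite <- Hc1.
  assert (c * (exp (- lam / (2 * Ef x y 0)) / (lam * x * y)) <= c * (1 / (lam * x * y))).
  { apply Rmult_le_compat_l; [lra|]. unfold Rdiv.
    apply Rmult_le_compat_r; [left; apply Rinv_0_lt_compat|]; lra. }
  unfold Rdiv in *. lra.
Qed.

(* At s = -1, E = (x-y)^2 and e^(-lam/E) = e^(-z/2) <= Ka z^(-k). *)
Lemma left_prim_at_minus1 k z x y : 0 < k -> 1 <= z -> 0 < x -> 0 < y -> x <> y ->
  let lam := z * (x - y) ^ 2 / 2 in
  let c := lam / k * Rpower (2 / lam) k * Kd k in
  - left_prim k lam c x y (-1)
  <= Ka k * Rpower z (- k) * Rpower ((x - y) ^ 2) (- k) / (2 * x * y * k).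
Proof.
  intros Hk Hz Hx Hy Hxy lam c.
  assert (HD := sqr_diff_pos x y Hxy). set (D2 := (x - y) ^ 2) in *.
  assert (Hlam : 0 < lam) by (unfold lam; nra).
  assert (Hc : 0 < c).
  { assert (0 < lam / k) by (apply Rdiv_lt_0_compat; lra).
    unfold c. apply Rmult_lt_0_compat; [apply Rmult_lt_0_compat; auto|]; apply exp_pos. }
  assert (Hxyk : 0 < 2 * x * y * k) by (repeat apply Rmult_lt_0_compat; lra).
  assert (Hlxy : 0 < lam * x * y) by (apply Rmult_lt_0_compat; [apply Rmult_lt_0_compat|]; lra).
  unfold left_prim, left_dens.
  replace (Ef x y (-1)) with D2 by (unfold Ef, D2; ring).
  assert (T2 : 0 <= c * (exp (- lam / (2 * D2)) / (lam * x * y)))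
    by (left; apply Rmult_lt_0_compat; [lra | apply Rdiv_lt_0_compat; [apply exp_pos | lra]]).
  assert (T1 : exp (- k * ln D2 - lam / D2) <= Ka k * Rpower z (- k) * Rpower D2 (- k)).
  { replace (- k * ln D2 - lam / D2) with (- k * ln D2 + - (z / 2)) by (unfold lam; field; lra).
    rewrite exp_plus. replace (Ka k * Rpower z (- k) * Rpower D2 (- k))
      with (Rpower D2 (- k) * (Ka k * Rpower z (- k))) by ring.
    apply Rmult_le_compat_l; [left; apply exp_pos|].
    apply Rle_trans with (exp (- z / 4)); [apply exp_mono; lra | apply Ka_spec; lra]. }
  assert (exp (- k * ln D2 - lam / D2) / (2 * x * y * k)
          <= Ka k * Rpower z (- k) * Rpower D2 (- k) / (2 * x * y * k)).
  { unfold Rdiv. apply Rmult_le_compat_r; [left; apply Rinv_0_lt_compat|]; lra. }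
  replace (- exp (- k * ln D2 - lam / D2) / (2 * x * y * k))
    with (- (exp (- k * ln D2 - lam / D2) / (2 * x * y * k))) by (field; lra).
  lra.
Qed.

Lemma Psi_left_integral k z x y : 0 < k -> 1 <= z -> 0 < x -> 0 < y -> x <> y ->
  RInt (Psi k z x y) (-1) 0
  <= Ka k * Rpower z (- k) * Rpower ((x - y) ^ 2) (- k) / (2 * x * y * k)
     + Rpower 4 k * Kd k * Rpower z (- k) * Rpower ((x - y) ^ 2) (- k) / (k * x * y).
Proof.
  intros Hk Hz Hx Hy Hxy.
  assert (Hlam : 0 < z * (x - y) ^ 2 / 2) by (assert (H := sqr_diff_pos x y Hxy); nra).
  set (lam := z * (x - y) ^ 2 / 2) in *.
  set (c := lam / k * Rpower (2 / lam) k * Kd k).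
  apply Rle_trans with (RInt (left_maj k lam c x y) (-1) 0).
  - apply RInt_le; [lra | apply Psi_ex; auto; lra | |].
    + apply (ex_RInt_continuous (V:=R_CompleteNormedModule)). intros t Ht.
      rewrite Rmin_left, Rmax_right in Ht by lra. apply left_maj_cont; auto; lra.
    + intros t Ht. apply Psi_le_left_maj; auto; lra.
  - rewrite (RInt_FTC (left_prim k lam c x y)) by
      (lra || (intros t Ht; apply left_prim_deriv; auto; lra)
           || (intros t Ht; apply left_maj_cont; auto; lra)).
    assert (H0 := left_prim_at_0 k z x y Hk Hz Hx Hy Hxy).
    assert (H1 := left_prim_at_minus1 k z x y Hk Hz Hx Hy Hxy).
    cbv zeta in H0, H1. fold lam c in H0, H1. lra.
Qed.

Lemma Psi_RInt_le_sup k z x y a : 0 < k -> 1 <= z -> 0 < x -> 0 < y -> x <> y -> -1 <= a ->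
  (forall s, a < s < a + 1 -> 1 / 4 <= theta x y s /\ (x + y) ^ 2 / 2 <= Ef x y s) ->
  RInt (Psi k z x y) a (a + 1)
  <= 2 * Ka k * (Rpower z (- k) * Rpower ((x - y) ^ 2) (- k) / (x + y) ^ 2).
Proof.
  intros Hk Hz Hx Hy Hxy Ha H.
  rewrite <- (Rmult_1_r (2 * Ka k * _)). replace 1 with (a + 1 - a) at 2 by ring.
  apply RInt_le_const; [lra | apply Psi_ex; auto; lra |].
  intros s Hs. destruct (H s Hs). apply Psi_le_sup; auto; lra.
Qed.

(* On [0,1], theta >= 1/4 and E >= (x+y)^2/2 everywhere. *)
Lemma Psi_right_integral k z x y : 0 < k -> 1 <= z -> 0 < x -> 0 < y -> x <> y ->
  RInt (Psi k z x y) 0 1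
  <= 2 * Ka k * (Rpower z (- k) * Rpower ((x - y) ^ 2) (- k) / (x + y) ^ 2).
Proof.
  intros Hk Hz Hx Hy Hxy.
  replace (RInt (Psi k z x y) 0 1) with (RInt (Psi k z x y) 0 (0 + 1)) by (f_equal; ring).
  apply Psi_RInt_le_sup; auto; try lra. intros s Hs. split.
  - apply theta_quarter; auto; try lra.
    assert (HEl := Ef_le x y s Hx Hy ltac:(lra)).
    assert (0 <= 2 * (x - y) ^ 2 * (1 - s)) by (apply Rmult_le_pos; nra).
    assert (HS : 0 <= (x + y) ^ 2) by apply pow2_ge_0.
    assert (1 <= (1 + s) ^ 2) by nra.
    assert ((x + y) ^ 2 <= (x + y) ^ 2 * (1 + s) ^ 2) by nra.
    lra.
  - unfold Ef. assert (0 <= x * y * s) by (apply Rmult_le_pos; nra). nra.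
Qed.

(* On [-1,0], the same holds when (x-y)^2 >= (x+y)^2/2. *)
Lemma Psi_left_integral_far k z x y : 0 < k -> 1 <= z -> 0 < x -> 0 < y -> x <> y ->
  (x + y) ^ 2 / 2 <= (x - y) ^ 2 ->
  RInt (Psi k z x y) (-1) 0
  <= 2 * Ka k * (Rpower z (- k) * Rpower ((x - y) ^ 2) (- k) / (x + y) ^ 2).
Proof.
  intros Hk Hz Hx Hy Hxy Hfar.
  replace (RInt (Psi k z x y) (-1) 0) with (RInt (Psi k z x y) (-1) (-1 + 1))
    by (f_equal; ring).
  apply Psi_RInt_le_sup; auto; try lra. intros s Hs.
  assert (HEg := Ef_ge x y s Hx Hy ltac:(lra)). split; [|lra].
  apply theta_quarter; auto; try lra.
  assert (HEl := Ef_le x y s Hx Hy ltac:(lra)).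
  assert (2 * (x - y) ^ 2 <= 2 * (x - y) ^ 2 * (1 - s)) by nra.
  assert (0 <= (x + y) ^ 2 * (1 + s) ^ 2) by (apply Rmult_le_pos; nra).
  lra.
Qed.

(* When (x-y)^2 < (x+y)^2/2 we have xy > (x+y)^2/8, and the explicit
   primitives of Psi_left_integral give the same shape of bound. *)
Lemma Psi_left_integral_near k z x y : 0 < k -> 1 <= z -> 0 < x -> 0 < y -> x <> y ->
  (x - y) ^ 2 < (x + y) ^ 2 / 2 ->
  RInt (Psi k z x y) (-1) 0
  <= (4 * Ka k / k + 8 * Rpower 4 k * Kd k / k)
     * (Rpower z (- k) * Rpower ((x - y) ^ 2) (- k) / (x + y) ^ 2).
Proof.
  intros Hk Hz Hx Hy Hxy Hnear.
  assert (Hxy8 : (x + y) ^ 2 / 8 < x * y) by nra.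
  assert (HS : 0 < (x + y) ^ 2) by nra.
  assert (HKa : 0 < Ka k * Rpower z (- k) * Rpower ((x - y) ^ 2) (- k))
    by (repeat apply Rmult_lt_0_compat; apply exp_pos).
  assert (HKd : 0 < Rpower 4 k * Kd k * Rpower z (- k) * Rpower ((x - y) ^ 2) (- k))
    by (repeat apply Rmult_lt_0_compat; apply exp_pos).
  eapply Rle_trans; [apply Psi_left_integral; auto|].
  rewrite Rmult_plus_distr_r. apply Rplus_le_compat.
  - apply Rmult_le_reg_r with (2 * x * y * k * (x + y) ^ 2);
      [repeat apply Rmult_lt_0_compat; lra|].
    field_simplify; try lra. nra.
  - apply Rmult_le_reg_r with (k * x * y * (x + y) ^ 2);
      [repeat apply Rmult_lt_0_compat; lra|].
    field_simplify; try lra. nra.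
Qed.

Definition K3 k := 4 * Ka k + 4 * Ka k / k + 8 * Rpower 4 k * Kd k / k.

Lemma K3_pos k : 0 < k -> 0 < K3 k.
Proof.
  intros Hk. unfold K3.
  assert (0 < Ka k) by apply exp_pos. assert (0 < Kd k) by apply exp_pos.
  assert (0 < Rpower 4 k) by apply exp_pos.
  assert (0 < / k) by (apply Rinv_0_lt_compat; lra).
  assert (0 < Rpower 4 k * Kd k * / k) by (repeat apply Rmult_lt_0_compat; lra).
  unfold Rdiv. nra.
Qed.

Lemma Psi_integral_bound k z x y : 0 < k -> 1 <= z -> 0 < x -> 0 < y -> x <> y ->
  RInt (Psi k z x y) (-1) 1
  <= K3 k * (Rpower z (- k) * Rpower ((x - y) ^ 2) (- k) / (x + y) ^ 2).
Proof.
  intros Hk Hz Hx Hy Hxy.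
  set (X := Rpower z (- k) * Rpower ((x - y) ^ 2) (- k) / (x + y) ^ 2).
  assert (HX : 0 < X).
  { assert (HS : 0 < (x + y) ^ 2) by nra.
    unfold X; apply Rdiv_lt_0_compat; [apply Rmult_lt_0_compat; apply exp_pos | lra]. }
  assert (HKa : 0 < Ka k) by apply exp_pos.
  assert (Hc : 0 < 4 * Ka k / k + 8 * Rpower 4 k * Kd k / k).
  { apply Rplus_lt_0_compat; apply Rdiv_lt_0_compat; try lra.
    repeat apply Rmult_lt_0_compat; try lra; apply exp_pos. }
  rewrite (RInt_Chasles_R _ (-1) 0 1) by (apply Psi_ex; auto; lra).
  assert (R1 := Psi_right_integral k z x y Hk Hz Hx Hy Hxy). fold X in R1.
  unfold K3. destruct (Rlt_le_dec ((x - y) ^ 2) ((x + y) ^ 2 / 2)) as [Hnear|Hfar].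
  - assert (L := Psi_left_integral_near k z x y Hk Hz Hx Hy Hxy Hnear). fold X in L.
    unfold Rdiv in *. nra.
  - assert (L := Psi_left_integral_far k z x y Hk Hz Hx Hy Hxy Hfar). fold X in L.
    unfold Rdiv in *. nra.
Qed.

Definition Kout k := (1 + Rpower (Mk k) k) / PI * Rpower 2 (2 * k + 1 / 2) * exp 1.

Lemma Kout_pos k : 0 < Kout k.
Proof.
  assert (0 < Rpower (Mk k) k) by apply exp_pos.
  unfold Kout. apply Rmult_lt_0_compat; [apply Rmult_lt_0_compat|]; try apply exp_pos.
  apply Rdiv_lt_0_compat; [lra | apply PI_RGT_0].
Qed.

Lemma theta_lt_1 x y s : 0 < x -> 0 < y -> x <> y -> -1 < s < 1 -> theta x y s < 1.
Proof.
  intros Hx Hy Hxy Hs. assert (HE := Ef_pos x y s Hx Hy Hxy ltac:(lra)).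
  assert (0 < (x + y) ^ 2 * (1 - s ^ 2) / (4 * Ef x y s))
    by (apply Rdiv_lt_0_compat; [apply Rmult_lt_0_compat|]; nra).
  unfold theta. lra.
Qed.

(* (1-s^2)^p <= (4E/(x+y)^2)^p e^(-p theta) for p >= 0: indeed
   1 - theta = (x+y)^2 (1-s^2) / (4E) and ln(1 - theta) <= -theta. *)
Lemma one_minus_s2_le p x y s : 0 <= p -> 0 < x -> 0 < y -> x <> y -> -1 < s < 1 ->
  p * ln (1 - s ^ 2) <= p * (ln 4 + ln (Ef x y s) - ln ((x + y) ^ 2) - theta x y s).
Proof.
  intros Hp Hx Hy Hxy Hs.
  assert (HE := Ef_pos x y s Hx Hy Hxy ltac:(lra)).
  assert (Hu : 0 < 1 - s ^ 2) by nra.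
  assert (HS : 0 < (x + y) ^ 2) by nra.
  assert (Hth : 1 - theta x y s = (x + y) ^ 2 * (1 - s ^ 2) / (4 * Ef x y s))
    by (unfold theta; field; lra).
  assert (Hth0 := theta_lt_1 x y s Hx Hy Hxy Hs).
  assert (Hlth : ln (1 - theta x y s)
                 = ln ((x + y) ^ 2) + ln (1 - s ^ 2) - ln 4 - ln (Ef x y s)).
  { rewrite Hth, ln_div, !ln_mult by (try apply Rmult_lt_0_compat; lra). ring. }
  assert (H := ln_le_sub1 (1 - theta x y s) ltac:(lra)).
  apply Rmult_le_compat_l; lra.
Qed.

(* After cancelling Gamma(z), z = m + 1/2, against the normalisation of
   Pi_m, the bound of the xi-integral times the density of Pi_m is an
   exponential of a linear form in logarithms. *)
Lemma inner_density_eq k m E s : 1 / 2 <= m -> -1 < s < 1 ->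
  beta_const m * (1 + Rpower (Mk k) k) * Rpower (m + 1 / 2) k * Gamma (m + 1 / 2)
    * Rpower (4 / E) (m + 1 / 2 + k) * Pi_density m s
  = (1 + Rpower (Mk k) k) / PI * Rpower (m + 1 / 2) k
    * exp (- (m + 1 / 2) * ln 2 + (m + 1 / 2 + k) * ln (4 / E)
           + (m - 1 / 2) * ln (1 - s ^ 2) - m * ln 2).
Proof.
  intros Hm Hs.
  assert (HG := Gamma_pos (m + 1 / 2) ltac:(lra)).
  assert (Hpi : 0 < PI) by apply PI_RGT_0.
  assert (Hsp : 0 < sqrt PI) by (apply sqrt_lt_R0; lra).
  assert (Hspp : sqrt PI * sqrt PI = PI) by (apply sqrt_sqrt; lra).
  assert (0 < exp (m * ln 2)) by apply exp_pos.
  replace (- (m + 1 / 2) * ln 2 + (m + 1 / 2 + k) * ln (4 / E)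
           + (m - 1 / 2) * ln (1 - s ^ 2) - m * ln 2)
    with (- (m + 1 / 2) * ln 2 + (m + 1 / 2 + k) * ln (4 / E)
          + (m - 1 / 2) * ln (1 - s ^ 2) + - (m * ln 2)) by ring.
  unfold beta_const, Pi_density, Rpower. rewrite !exp_plus, exp_Ropp.
  set (q := sqrt PI) in *. rewrite <- Hspp. field. repeat split; lra.
Qed.

(* The bound of the xi-integral times the density of Pi_m is at most
   Kout z^k (4/(x+y)^2)^(z-1) Psi(s), z = m + 1/2; the factor (1-s^2)^(z-1)
   is handled by one_minus_s2_le. *)
Lemma outer_integrand_le k m x y s : 0 < k -> 1 / 2 <= m -> 0 < x -> 0 < y -> x <> y ->
  -1 < s < 1 ->
  beta_const m * (1 + Rpower (Mk k) k) * Rpower (m + 1 / 2) k * Gamma (m + 1 / 2)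
    * Rpower (4 / Ef x y s) (m + 1 / 2 + k) * Pi_density m s
  <= Kout k * Rpower (m + 1 / 2) k * Rpower (4 / (x + y) ^ 2) (m + 1 / 2 - 1)
     * Psi k (m + 1 / 2) x y s.
Proof.
  intros Hk Hm Hx Hy Hxy Hs.
  rewrite inner_density_eq by auto.
  assert (HE := Ef_pos x y s Hx Hy Hxy ltac:(lra)).
  assert (HS : 0 < (x + y) ^ 2) by nra.
  assert (HA : 0 < (1 + Rpower (Mk k) k) / PI * Rpower (m + 1 / 2) k).
  { assert (0 < Rpower (Mk k) k) by apply exp_pos.
    apply Rmult_lt_0_compat; [apply Rdiv_lt_0_compat; [lra | apply PI_RGT_0] | apply exp_pos]. }
  replace (Kout k * Rpower (m + 1 / 2) k * Rpower (4 / (x + y) ^ 2) (m + 1 / 2 - 1)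
           * Psi k (m + 1 / 2) x y s)
    with ((1 + Rpower (Mk k) k) / PI * Rpower (m + 1 / 2) k
          * exp ((2 * k + 1 / 2) * ln 2 + 1 + (m + 1 / 2 - 1) * ln (4 / (x + y) ^ 2)
                 + (- (1 + k) * ln (Ef x y s) - (m + 1 / 2) * theta x y s)))
    by (unfold Kout, Psi, Rpower; rewrite !exp_plus; unfold Rdiv; ring).
  apply Rmult_le_compat_l; [lra|]. apply exp_mono.
  assert (Hq := one_minus_s2_le (m - 1 / 2) x y s ltac:(lra) Hx Hy Hxy Hs).
  assert (Ht := theta_lt_1 x y s Hx Hy Hxy Hs).
  rewrite (ln_div 4 (Ef x y s)), (ln_div 4 ((x + y) ^ 2)) by lra.
  assert (Hl4 : ln 4 = 2 * ln 2) by (replace 4 with (2 * 2) by ring; rewrite ln_mult by lra; ring).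
  rewrite Hl4 in *.
  set (a := ln 2) in *. set (b := ln (Ef x y s)) in *. set (c := ln (1 - s ^ 2)) in *.
  set (d := ln ((x + y) ^ 2)) in *. set (t := theta x y s) in *.
  nra.
Qed.

Lemma outer_integrand_bound k m x y s : 0 < k -> 1 / 2 <= m -> 0 < x -> 0 < y -> x <> y ->
  -1 < s < 1 ->
  Rint (fun xi => Rpower xi (- k) * beta m xi
                  * exp (- ((x ^ 2 + y ^ 2 + 2 * x * y * s) / (4 * xi)))) 0 1
    * Pi_density m s
  <= Kout k * Rpower (m + 1 / 2) k * Rpower (4 / (x + y) ^ 2) (m + 1 / 2 - 1)
     * Psi k (m + 1 / 2) x y s.
Proof.
  intros Hk Hm Hx Hy Hxy Hs.
  assert (HE := Ef_pos x y s Hx Hy Hxy ltac:(lra)).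
  assert (HG := Gamma_pos (m + 1 / 2) ltac:(lra)).
  assert (Hdens : 0 <= Pi_density m s).
  { unfold Pi_density. left. apply Rdiv_lt_0_compat; [apply exp_pos|].
    repeat apply Rmult_lt_0_compat; auto; [|apply exp_pos].
    apply sqrt_lt_R0, PI_RGT_0. }
  eapply Rle_trans; [|apply outer_integrand_le; auto].
  apply Rmult_le_compat_r; auto.
  apply inner_bound; auto; try lra.
  - left; apply beta_const_pos.
  - intros xi Hxi. replace (m + 1 / 2 + 1 + k) with (m + 3 / 2 + k) by lra.
    apply (inner_integrand_le m k (Ef x y s)); auto; lra.
Qed.

Lemma I_k_bound k m x y : 0 < k -> 1 / 2 <= m -> 0 < x -> 0 < y -> x <> y ->
  I_k k m x y
  <= Kout k * Rpower (m + 1 / 2) k * Rpower (4 / (x + y) ^ 2) (m + 1 / 2 - 1)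
     * (K3 k * (Rpower (m + 1 / 2) (- k) * Rpower ((x - y) ^ 2) (- k) / (x + y) ^ 2)).
Proof.
  intros Hk Hm Hx Hy Hxy.
  set (Kz := Kout k * Rpower (m + 1 / 2) k * Rpower (4 / (x + y) ^ 2) (m + 1 / 2 - 1)).
  assert (HKz : 0 < Kz)
    by (unfold Kz; apply Rmult_lt_0_compat; [apply Rmult_lt_0_compat; [apply Kout_pos|]|];
        apply exp_pos).
  assert (HPsi : 0 <= RInt (Psi k (m + 1 / 2) x y) (-1) 1)
    by (apply RInt_ge_0; [lra | apply Psi_ex; auto; lra | intros; left; apply exp_pos]).
  assert (Hb := Psi_integral_bound k (m + 1 / 2) x y Hk ltac:(lra) Hx Hy Hxy).
  apply Rle_trans with (Kz * RInt (Psi k (m + 1 / 2) x y) (-1) 1);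
    [|apply Rmult_le_compat_l; lra].
  unfold I_k. apply Rint_le; [apply Rmult_le_pos; lra|]. intros Hex.
  rewrite <- RInt_scal_R by (apply Psi_ex; auto; lra).
  apply RInt_le; [lra | exact Hex | |].
  - apply ex_RInt_der; [lra|]. intros t Ht. apply ex_derive_mult; [apply ex_derive_const|].
    assert (HE := Ef_pos x y t Hx Hy Hxy ltac:(lra)).
    unfold Psi, theta. unfold Ef in *. auto_derive. lra.
  - intros s Hs. apply outer_integrand_bound; auto.
Qed.

Lemma Rpower_sqr_abs d p : d <> 0 -> Rpower (d ^ 2) (- p) = / Rpower (Rabs d) (2 * p).
Proof.
  intros Hd. assert (Ha : 0 < Rabs d) by (apply Rabs_pos_lt; auto).
  replace (d ^ 2) with (Rabs d * Rabs d) by (rewrite <- Rabs_mult, Rabs_right; nra).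
  unfold Rpower. rewrite ln_mult, <- exp_Ropp by lra. f_equal. ring.
Qed.

(* The factor (4/(x+y)^2)^(alpha + n - 1/2) / (x+y)^2 is controlled by
   (x+y)^(-(2 alpha + 1)) (xy)^(-n), since 4xy <= (x+y)^2. *)
Lemma mean_factor_bound alpha n x y : 0 <= n -> 0 < x -> 0 < y ->
  Rpower (4 / (x + y) ^ 2) (alpha + n - 1 / 2) / (x + y) ^ 2
  <= Rpower 4 (alpha + 1 / 2) / 4 / (Rpower (x + y) (2 * alpha + 1) * Rpower (x * y) n).
Proof.
  intros Hn Hx Hy. unfold Rpower.
  set (L := ln (x + y)). set (P := ln (x * y)).
  assert (HL2 : ln ((x + y) ^ 2) = 2 * L) by (unfold L; rewrite ln_pow by lra; simpl; ring).
  assert (HPL : ln 4 + P <= 2 * L).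
  { rewrite <- HL2. unfold P. rewrite <- ln_mult by nra.
    assert (0 <= (x - y) ^ 2) by apply pow2_ge_0. apply ln_le; nra. }
  assert (HS : (x + y) ^ 2 = exp (2 * L)) by (rewrite <- HL2, exp_ln; nra).
  assert (Esub : forall a b, exp (a - b) = exp a / exp b)
    by (intros; unfold Rminus, Rdiv; rewrite exp_plus, exp_Ropp; reflexivity).
  rewrite ln_div, HL2, HS, <- Esub by nra.
  replace (exp ((alpha + 1 / 2) * ln 4) / 4)
    with (exp ((alpha + 1 / 2) * ln 4 - ln 4)) by (rewrite Esub, exp_ln; lra).
  rewrite <- exp_plus, <- Esub.
  apply exp_mono.
  assert (n * (ln 4 + P - 2 * L) <= 0) by (apply Rmult_le_0_l; lra).
  nra.
Qed.

(* Assembly of the constants: with z = alpha + n + 1/2, the bound of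
   I_k_bound is C / ((x+y)^(2 alpha + 1) (xy)^n |x-y|^(2k)), since the
   factors z^k and z^(-k) cancel. *)
Lemma I_k_bound_le alpha k n x y : 0 < k -> 0 <= n -> 0 < x -> 0 < y -> x <> y ->
  let z := alpha + n + 1 / 2 in
  Kout k * Rpower z k * Rpower (4 / (x + y) ^ 2) (z - 1)
    * (K3 k * (Rpower z (- k) * Rpower ((x - y) ^ 2) (- k) / (x + y) ^ 2))
  <= Kout k * K3 k * (Rpower 4 (alpha + 1 / 2) / 4)
     / (Rpower (x + y) (2 * alpha + 1) * Rpower (x * y) n * Rpower (Rabs (x - y)) (2 * k)).
Proof.
  intros Hk Hn Hx Hy Hxy z.
  assert (Hzz : Rpower z k * Rpower z (- k) = 1)
    by (unfold Rpower; rewrite <- exp_plus, <- exp_0; f_equal; ring).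
  rewrite Rpower_sqr_abs by lra.
  replace (z - 1) with (alpha + n - 1 / 2) by (unfold z; lra).
  set (D := Rpower (Rabs (x - y)) (2 * k)).
  assert (HDp : 0 < D) by apply exp_pos.
  assert (HK := Rmult_lt_0_compat _ _ (Kout_pos k) (K3_pos k Hk)).
  apply Rle_trans with (Kout k * K3 k
    * (Rpower (4 / (x + y) ^ 2) (alpha + n - 1 / 2) / (x + y) ^ 2) * / D).
  - right. set (Zp := Rpower z k) in *. set (Zm := Rpower z (- k)) in *.
    transitivity (Kout k * K3 k * (Rpower (4 / (x + y) ^ 2) (alpha + n - 1 / 2) / (x + y) ^ 2)
                  * / D * (Zp * Zm)); [unfold Rdiv; ring | rewrite Hzz; ring].
  - apply Rle_trans with (Kout k * K3 k * (Rpower 4 (alpha + 1 / 2) / 4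
      / (Rpower (x + y) (2 * alpha + 1) * Rpower (x * y) n)) * / D).
    + apply Rmult_le_compat_r; [left; apply Rinv_0_lt_compat; lra|].
      apply Rmult_le_compat_l; [lra|]. apply mean_factor_bound; lra.
    + right. field. repeat split; try lra; apply Rgt_not_eq, exp_pos.
Qed.

Theorem mainTheorem7 :
  forall (alpha k : R), alpha >= - (1 / 2) -> k > 0 ->
  exists C : R,
    forall (a : R) (j : nat) (x y : R),
      a >= 1 -> (1 <= j)%nat -> x > 0 -> y > 0 -> x <> y ->
      I_k k (alpha + a * INR j) x y
      <= C / (Rpower (x + y) (2 * alpha + 1) * Rpower (x * y) (a * INR j)
              * Rpower (Rabs (x - y)) (2 * k)).
Proof.
  intros alpha k Hal Hk.
  exists (Kout k * K3 k * (Rpower 4 (alpha + 1 / 2) / 4)).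
  intros a j x y Ha Hj Hx Hy Hxy.
  assert (Hn : 1 <= a * INR j) by (assert (1 <= INR j) by (apply (le_INR 1); auto); nra).
  eapply Rle_trans; [apply I_k_bound; auto; lra|].
  apply (I_k_bound_le alpha k (a * INR j) x y); auto; lra.
Qed.
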